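(* Define $a(n)$ by $\sum_{n\ge1}a(n)q^n=\frac{1}{1+q}\sum_{n=1}^\infty q^{n(3n+1)/2}(1-q^{2n+1})$. Then for every positive integer $n$, $$a(n)=\begin{cases}-(-1)^{n-\lfloor n\rfloor_p}, & \text{if } R(\lfloor n\rfloor_p) \text{ is even and positive},\\ 0, & \text{if } R(\lfloor n\rfloor_p)\text{ is odd and negative},\\ (-1)^{n-\lfloor n\rfloor_p}, & \text{if } R(\lfloor n\rfloor_p)\text{ is odd and positive},\\ -2(-1)^{n-\lfloor n\rfloor_p}, & \text{if } R(\lfloor n\rfloor_p)\text{ is even and negative}.\end{cases}$$
   Context: $\mathcal{P}=\{m(3m+1)/2:m\in\mathbb{Z}\}$ is the set of (generalized) pentagonal numbers; for $n=m(3m+1)/2\in\mathcal{P}$ put $R(n)=m$ (well defined). $\lfloor n\rfloor_p$ is the largest element of $\mathcal{P}$ that is $\le n$. *)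

From mathcomp Require Import all_boot all_order all_algebra.
Set Implicit Arguments. Unset Strict Implicit. Unset Printing Implicit Defensive.
Import Order.TTheory GRing.Theory Num.Theory.
Local Open Scope ring_scope.

(* Generalized pentagonal number m(3m+1)/2 for m : int (exact division). *)
Definition pent (m : int) : int := ((m * (3 * m + 1)) %/ 2)%Z.

Definition is_pent (n : int) : Prop := exists m : int, pent m = n.

Definition is_pfloor (n p : int) : Prop :=
  is_pent p /\ p <= n /\ (forall p', is_pent p' -> p' <= n -> p' <= p).

(* Coefficient of q^k in  sum_{i>=1} q^{i(3i+1)/2} (1 - q^{2i+1})
   (only i <= k can contribute to q^k). *)
Definition numc (k : nat) : int :=
  \sum_(1 <= i < k.+1)
     (((((i * (3 * i + 1)) %/ 2)%N == k) : int)
      - (((((i * (3 * i + 1)) %/ 2) + (2 * i + 1))%N == k) : int)).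

(* a(n): coefficient of q^n in (1/(1+q)) * (the series above),
   with 1/(1+q) = sum_{j>=0} (-1)^j q^j (Cauchy product). *)
Definition acoef (n : nat) : int :=
  \sum_(0 <= j < n.+1) (-1) ^+ j * numc (n - j).

(* Since 1/(1+q) = \sum_j (-1)^j q^j, a(n) = (-1)^n \sum_(p <= n) (-1)^p c_p, where
   c_p is the coefficient of q^p in \sum_(i >= 1) (q^P(i) - q^P(-i-1)) and
   P(m) = m(3m+1)/2.  As P(-i-1) = P(i) + 2i + 1 has the parity opposite to P(i),
   the i-th summand contributes (-1)^P(i) once for each of its two exponents that
   is at most n.  The pentagonal numbers interleave as P(i) < P(-i-1) < P(i+1), so
   for R = R(floor_p n) the indices i < |R| contribute twice, the index R once if
   R > 0, and the others not at all.  The signs (-1)^P(i) run + - - + + - - ...,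
   so the doubled contributions cancel in pairs, leaving 2 (-1)^P(|R|-1) or 0
   according to the parity of |R| - 1. *)

From mathcomp Require Import all_boot all_order all_algebra zify.
Set Implicit Arguments. Unset Strict Implicit. Unset Printing Implicit Defensive.
Import Order.TTheory GRing.Theory Num.Theory.
Local Open Scope ring_scope.

Definition pentn (i : nat) : nat := ((i * (3 * i + 1)) %/ 2)%N.
Definition pentnN (i : nat) : nat := (pentn i + (2 * i + 1))%N.

Lemma pentnS i : pentn i.+1 = (pentn i + (3 * i + 2))%N.
Proof. by rewrite /pentn -divnDMl //; congr (_ %/ _)%N; lia. Qed.

Lemma leq_pentn i : (i <= pentn i)%N.
Proof. by elim: i => [|i IHi] //; rewrite pentnS; lia. Qed.

Lemma pentn_homo : {homo pentn : i j / (i <= j)%N}.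
Proof. by apply: homo_leq => // i; [exact: leq_trans | rewrite pentnS; lia]. Qed.

Lemma pent_nat (k : nat) : pent k = pentn k.
Proof. by rewrite /pent /pentn -divz_nat. Qed.

Lemma pent_negS (k : nat) : pent (- k.+1%:Z) = pentnN k.
Proof. by rewrite /pent /pentnN /pentn -divnDMl // -divz_nat; congr (_ %/ _)%Z; lia. Qed.

Lemma pfloor_lt (n p q : int) : is_pfloor n p -> is_pent q -> p < q -> n < q.
Proof.
move=> [_ [_ max_p]] pent_q lt_pq; rewrite ltNge; apply/negP => /(max_p _ pent_q).
by rewrite leNgt lt_pq.
Qed.

Lemma pfloor_neq0 (n : nat) : (0 < n)%N -> ~ is_pfloor n (pent 0).
Proof.
move=> n_gt0 fl; have := pfloor_lt fl (ex_intro _ (- 1%:Z) erefl).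
by rewrite pent_negS pent_nat !ltz_nat => /(_ isT); rewrite /pentnN /pentn; lia.
Qed.

Lemma pfloor_pos (n j : nat) :
  is_pfloor n (pent j.+1) -> (pentn j.+1 <= n < pentnN j.+1)%N.
Proof.
move=> fl; have [_ [+ _]] := fl; rewrite pent_nat lez_nat => -> /=.
have := pfloor_lt fl (ex_intro _ (- j.+2%:Z) erefl).
by rewrite pent_negS pent_nat !ltz_nat; apply; rewrite /pentnN; lia.
Qed.

Lemma pfloor_neg (n k : nat) :
  is_pfloor n (pent (- k.+1%:Z)) -> (pentnN k <= n < pentn k.+1)%N.
Proof.
move=> fl; have [_ [+ _]] := fl; rewrite pent_negS lez_nat => -> /=.
have := pfloor_lt fl (ex_intro _ k.+1%:Z erefl).
by rewrite pent_negS pent_nat !ltz_nat; apply; rewrite pentnS /pentnN; lia.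
Qed.

Definition pent_count (n i : nat) : nat := (pentn i <= n) + (pentnN i <= n).

Lemma pent_count_full n i : (pentnN i <= n)%N -> pent_count n i = 2.
Proof. by rewrite /pent_count /pentnN; lia. Qed.

Lemma pent_count_half n i : (pentn i <= n < pentnN i)%N -> pent_count n i = 1.
Proof. by rewrite /pent_count; lia. Qed.

Lemma pent_count_eq0 n i : (n < pentn i)%N -> pent_count n i = 0.
Proof. by rewrite /pent_count /pentnN; lia. Qed.

Section SignedSums.

Variable R : pzRingType.

Lemma sign_distn (m n : nat) :
  (-1) ^+ `|n%:Z - m%:Z|%N = (-1) ^+ n * (-1) ^+ m :> R.
Proof.
rewrite -[LHS]signr_odd -[(-1) ^+ n]signr_odd -[(-1) ^+ m]signr_odd -signr_addb.
congr (_ ^+ (nat_of_bool _)).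
case: (leqP m n) => [le_mn | /ltnW le_nm]; first by rewrite distnEl // oddB.
by rewrite distnEr // oddB // addbC.
Qed.

Lemma sum_sign_rev n (f : nat -> R) :
  \sum_(0 <= j < n.+1) (-1) ^+ j * f (n - j)%N =
  (-1) ^+ n * \sum_(0 <= p < n.+1) (-1) ^+ p * f p.
Proof.
rewrite big_nat_rev mulr_sumr; apply: eq_big_nat => p /andP[_ le_pn].
by rewrite add0n subSS subKn // mulrA -signr_odd oddB // signr_addb !signr_odd.
Qed.

Lemma sign_pentnS i : (-1) ^+ pentn i.+1 = (-1) ^+ i * (-1) ^+ pentn i :> R.
Proof.
rewrite pentnS -exprD -signr_odd -[RHS]signr_odd !oddD.
by case: (odd i); case: (odd (pentn i)).
Qed.

Lemma sign_pentnN i : (-1) ^+ pentnN i = - (-1) ^+ pentn i :> R.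
Proof. by rewrite exprD -[(-1) ^+ (2 * i + 1)]signr_odd oddD oddM /= mulrN1. Qed.

Lemma sum_sign_pentn j :
  \sum_(1 <= i < j.+1) (-1) ^+ pentn i = (if odd j then (-1) ^+ pentn j else 0) :> R.
Proof.
elim: j => [|j IHj]; first by rewrite big_geq.
rewrite big_nat_recr //= IHj sign_pentnS -[(-1) ^+ j]signr_odd.
by case: (odd j); rewrite ?mulN1r ?addrN ?mul1r ?add0r.
Qed.

Lemma sum_pent_count_split n j : (pentnN j <= n)%N ->
  \sum_(1 <= i < n.+1) (-1) ^+ pentn i *+ pent_count n i =
  (\sum_(1 <= i < j.+1) (-1) ^+ pentn i) *+ 2
  + \sum_(j.+1 <= i < n.+1) (-1) ^+ pentn i *+ pent_count n i :> R.
Proof.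
move=> le_jn; have le_j_pentn := leq_pentn j.
rewrite (big_cat_nat (n := j.+1)) //=; last by rewrite /pentnN in le_jn; lia.
congr (_ + _); rewrite -sumrMnl; apply: eq_big_nat => i /andP[_ le_ij].
rewrite ltnS in le_ij; have le_pentn_ij := pentn_homo le_ij.
by rewrite pent_count_full // /pentnN; rewrite /pentnN in le_jn; lia.
Qed.

Lemma sum_pent_count_tail n j : (n < pentn j)%N ->
  \sum_(j <= i < n.+1) (-1) ^+ pentn i *+ pent_count n i = 0 :> R.
Proof.
move=> lt_nj; rewrite big_nat_cond big1 // => i /andP[/andP[le_ji _] _].
by rewrite pent_count_eq0 //; apply: leq_trans (pentn_homo le_ji).
Qed.

End SignedSums.

Lemma numc_widen p N : (p < N)%N ->
  numc p = \sum_(1 <= i < N) (((pentn i == p) : int) - ((pentnN i == p) : int)).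
Proof.
move=> lt_pN; rewrite [RHS](big_cat_nat (n := p.+1)) //= -[LHS]addr0; congr (_ + _).
rewrite big_nat_cond big1 // => i /andP[/andP[lt_pi _] _].
have lt_p_pentn := leq_trans lt_pi (leq_pentn i).
by rewrite !gtn_eqF // /pentnN ltn_addr.
Qed.

Lemma sum_sign_eq (x N : nat) :
  \sum_(0 <= p < N) (-1) ^+ p * ((x == p) : int) = if (x < N)%N then (-1) ^+ x else 0.
Proof.
rewrite -[(x < N)%N]/(0 <= x < N)%N -(@big_nat1_eq _ 0 +%R) big_mkcond /=.
by apply: eq_bigr => p _; rewrite eq_sym; case: eqP => [->|_]; rewrite ?mulr1 ?mulr0.
Qed.

Lemma sum_sign_numc n :
  \sum_(0 <= p < n.+1) (-1) ^+ p * numc p =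
  \sum_(1 <= i < n.+1) (-1) ^+ pentn i *+ pent_count n i.
Proof.
under eq_big_nat => p /andP[_ lt_pn] do rewrite (numc_widen lt_pn) mulr_sumr.
rewrite exchange_big_nat; apply: eq_bigr => i _.
under eq_bigr do rewrite mulrBr.
rewrite sumrB !sum_sign_eq sign_pentnN /pent_count !ltnS.
by case: (pentn i <= n)%N; case: (pentnN i <= n)%N;
  rewrite /= ?subr0 ?opprK ?sub0r ?add0r ?mulr2n.
Qed.

Lemma sum_sign_numc_pos n j : (pentn j.+1 <= n < pentnN j.+1)%N ->
  \sum_(0 <= p < n.+1) (-1) ^+ p * numc p = (-1) ^+ j * (-1) ^+ pentn j.+1.
Proof.
case/andP => lo hi.
have le_jn : (pentnN j <= n)%N by rewrite pentnS /pentnN in lo *; lia.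
have lt_n_next : (n < pentn j.+2)%N by rewrite pentnS /pentnN in hi *; lia.
have lt_jn : (j < n)%N := leq_trans (leq_pentn j.+1) lo.
rewrite sum_sign_numc (sum_pent_count_split _ le_jn) sum_sign_pentn big_ltn ?ltnS //.
rewrite pent_count_half ?lo // sum_pent_count_tail // addr0.
rewrite sign_pentnS -[(-1) ^+ j]signr_odd.
by case: (odd j); rewrite ?mulN1r ?opprK ?mul1r ?mulr2n ?addrK ?add0r.
Qed.

Lemma sum_sign_numc_neg n k : (pentnN k <= n < pentn k.+1)%N ->
  \sum_(0 <= p < n.+1) (-1) ^+ p * numc p =
  (if odd k then (-1) ^+ pentn k else 0) *+ 2.
Proof.
case/andP => lo hi.
by rewrite sum_sign_numc (sum_pent_count_split _ lo) sum_pent_count_tail // addr0 sum_sign_pentn.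
Qed.

Theorem lemma5p2 (n : nat) (m : int) :
  (0 < n)%N ->
  is_pfloor n%:Z (pent m) ->
  acoef n =
    let s : int := (-1) ^+ `|n%:Z - pent m|%N in
    if 0 < m then
      (if odd `|m|%N then s else - s)
    else
      (if odd `|m|%N then 0 else - (2 * s)).
Proof.
move=> n_gt0 fl; rewrite /acoef sum_sign_rev /=.
case: m fl => [[|j] | k] fl.
- by case: (pfloor_neq0 n_gt0 fl).
- rewrite (sum_sign_numc_pos (pfloor_pos fl)) pent_nat sign_distn /=.
  by rewrite mulrCA -[(-1) ^+ j]signr_odd mulr_sign if_neg.
- rewrite NegzE in fl *; rewrite (sum_sign_numc_neg (pfloor_neg fl)).
  rewrite oppr_gt0 abszN pent_negS sign_distn sign_pentnN /=.
  by case: (odd k); rewrite ?mulr0n ?mulr0 // !mulrN opprK mulr_natl mulrnAr.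
Qed.
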